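(* There is a Luzin almost disjoint family (on a countable set) which has no uncountable $3$-near-Luzin subfamily.
   Context: An almost disjoint family is a collection of infinite sets whose pairwise intersections are finite. For an uncountable almost disjoint family $\mathcal A$ on a countable set $W$: $\mathcal A$ is Luzin iff there is an enumeration $\mathcal A=\{a_\alpha:\alpha<\omega_1\}$ such that for every finite $w\subseteq W$ and every $\alpha<\omega_1$ the set $\{\beta<\alpha: a_\alpha\cap a_\beta\subseteq w\}$ is finite. $\mathcal A$ is $3$-near-Luzin iff for all uncountable $\mathcal C_0,\mathcal C_1,\mathcal C_2\subseteq\mathcal A$ the set $\bigcap_{i<3}\bigcup\mathcal C_i$ is infinite. *)

From mathcomp Require Import all_boot all_order.
From mathcomp Require Import boolp classical_sets cardinality.
Set Implicit Arguments. Unset Strict Implicit. Unset Printing Implicit Defensive.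
Local Open Scope classical_set_scope.

(* An (I, lt) is "omega_1-like": a strict well-order on I that is total,
   in which I is uncountable and every proper initial segment is countable.
   Such an order is isomorphic to (omega_1, <). *)
Definition omega1_order (I : Type) (lt : I -> I -> Prop) : Prop :=
  (forall x, ~ lt x x) /\
  (forall x y z, lt x y -> lt y z -> lt x z) /\
  (forall x y, x = y \/ lt x y \/ lt y x) /\
  well_founded lt /\
  ~ countable [set: I] /\
  (forall x, countable [set y | lt y x]).

Definition almost_disjoint (T : Type) (A : set (set T)) : Prop :=
  (forall a, A a -> infinite_set a) /\
  (forall a b, A a -> A b -> a <> b -> finite_set (a `&` b)).

Definition uncountable (T : Type) (A : set T) : Prop := ~ countable A.

Definition luzin (T : Type) (A : set (set T)) : Prop :=
  almost_disjoint A /\ uncountable A /\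
  exists (I : Type) (lt : I -> I -> Prop) (a : I -> set T),
    [/\ omega1_order lt, injective a, range a = A &
        forall (w : set T) (alpha : I), finite_set w ->
          finite_set [set beta | lt beta alpha /\ a alpha `&` a beta `<=` w]].

Definition near_luzin (n : nat) (T : Type) (A : set (set T)) : Prop :=
  forall C : 'I_n -> set (set T),
    (forall i, C i `<=` A /\ uncountable (C i)) ->
    infinite_set (\bigcap_(i in [set: 'I_n]) \bigcup_(c in C i) c).

From Stdlib Require Import Wellfounded.
From mathcomp Require Import all_boot all_order.
From mathcomp Require Import boolp classical_sets cardinality wochoice.
Set Implicit Arguments. Unset Strict Implicit. Unset Printing Implicit Defensive.
Local Open Scope classical_set_scope.

(* Take an omega_1-like order and, for each a, an injective coding [code a] of the
   predecessors of a.  By transfinite recursion pick branches [branch a] of the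
   Cantor tree such that [branch a] differs from [branch d] for every d < a, and
   from [branch b] for every b < d < a with code a d <= code d b, at a position
   bounded in terms of code d b only.  The set [fam a] is the "trunk" of all
   pairs (s, t) of equal length with s an initial segment of [branch a], together
   with the "links" (branch b|n, branch a|n) for b < a, where n = [cut a b] is at
   least code a b and separates branch b from the finitely many branch c with
   code a c < code a b.  The link of b is a common point of [fam a] and [fam b] of
   length at least code a b: this is the Luzin property.  The forced
   disagreements and the choice of [cut] make the sets almost disjoint.
   Every point of [fam a] has branch a|n as a coordinate.  An uncountable set of
   branches contains three uncountable parts pairwise disagreeing below some N, so
   by pigeonhole the points common to members of the three corresponding
   subfamilies have length below N: there are finitely many of them. *)

Lemma countable_subset T (A B : set T) : A `<=` B -> countable B -> countable A.
Proof. by move=> /subset_card_le; apply: sub_countable. Qed.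

Lemma countable_image T U (f : T -> U) (A : set T) :
  countable A -> countable (f @` A).
Proof. exact: card_le_trans (card_image_le f A). Qed.

Lemma countable_inj_image T U (f : T -> U) (A : set T) :
  injective f -> countable (f @` A) = countable A.
Proof. by move=> f_inj; apply: eq_countable; apply: inj_card_eq => x y _ _ /f_inj. Qed.

Lemma countable_setU T (A B : set T) :
  countable A -> countable B -> countable (A `|` B).
Proof.
move=> cA cB; pose AB (b : bool) := if b then A else B.
have cAB : countable (\bigcup_(b in [set: bool]) AB b) by apply: bigcup_countable => // -[].
by apply: countable_subset cAB => x [Ax|Bx]; [exists true|exists false].
Qed.

Lemma uncountable_two_points T (A : set T) :
  ~ countable A -> exists x y, [/\ A x, A y & x <> y].
Proof.
move=> A_unc; have [x Ax] : exists x, A x.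
  apply: contrapT => /forallNP A0; apply: A_unc.
  by apply: countable_subset (countable0 _) => x /A0.
have [y Ay yx] : exists2 y, A y & y <> x.
  apply: contrapT => /forall2NP A1; apply: A_unc.
  by apply: countable_subset (countable1 x) => y Ay; case: (A1 y) => // /contrapT.
by exists y, x.
Qed.

Lemma eventually_all k (P : nat -> nat -> Prop) :
  (forall j, j < k -> exists n, forall m, n <= m -> P j m) ->
  exists n, forall m, n <= m -> forall j, j < k -> P j m.
Proof.
elim: k => [|k IH] P_ev; first by exists 0.
have [n1 Pn1] := IH (fun j jk => P_ev j (ltnW jk)).
have [n2 Pn2] := P_ev k (ltnSn k).
exists (maxn n1 n2) => m; rewrite geq_max => /andP[n1m n2m] j.
by rewrite ltnS leq_eqVlt => /orP[/eqP->|jk]; [apply: Pn2|apply: Pn1].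
Qed.

Lemma finite_set_bounded T (f : T -> nat) (A : set T) :
  finite_set A -> exists n, forall x, A x -> f x < n.
Proof.
move=> /(finite_image f)/finite_seqP[s fA]; exists (\max_(k <- s) k).+1 => x Ax.
have : (f @` A) (f x) by exists x.
by rewrite fA ltnS => /= fxs; apply: (@leq_bigmax_seq _ s xpredT id).
Qed.

Lemma finite_short_seqs (T : finType) n : finite_set [set s : seq T | size s < n].
Proof.
pose tuples := [set: {i : 'I_n & i.-tuple T}].
apply: sub_finite_set (finite_image (fun t => tval (tagged t)) (@finite_finset _ tuples)).
move=> s sn; pose t : (Ordinal sn).-tuple T := in_tuple s.
by exists (Tagged (fun i : 'I_n => i.-tuple T) t).
Qed.

Lemma ex_collision (T U : finType) (f : T -> U) :
  #|U| < #|T| -> exists i, exists2 j, i != j & f i = f j.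
Proof. by move=> UT; apply/injectivePn/negP => /injectiveP/leq_card; rewrite leqNgt UT. Qed.

Lemma uncountable_cantor : ~ countable [set: nat -> bool].
Proof.
move=> /pcard_surjP[g g_surj].
have [m _ gm] := g_surj (fun n => ~~ g n n) Logic.I.
by have /(congr1 (fun h => h m)) := gm; case: (g m m).
Qed.

Section OmegaOneOfWellOrder.
Variables (T : eqType) (R : rel T).
Hypothesis R_wo : well_order R.

Lemma wo_refl : reflexive R.
Proof. by move=> x; apply: (wo_chain_reflexive (withinW R_wo)). Qed.

Lemma wo_antisym : antisymmetric R.
Proof. by move=> x y; apply: (wo_chain_antisymmetric (withinW R_wo)). Qed.

Lemma wo_total : total R.
Proof. by move=> x y; apply: (wo_chainW (withinW R_wo)). Qed.

Lemma wo_minimum (P : T -> Prop) :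
  (exists x, P x) -> exists2 m, P m & forall y, P y -> R m y.
Proof.
move=> [x Px]; have ne : nonempty [pred z | `[< P z >]].
  by exists x; rewrite inE.
have [m [[Pm m_min] _]] := R_wo ne.
exists m => [|y Py]; first by move: Pm; rewrite inE.
by apply: m_min; rewrite inE.
Qed.

Lemma wo_trans : transitive R.
Proof.
move=> y x z Rxy Ryz; pose P w := [\/ w = x, w = y | w = z].
have [m Pm m_min] : exists2 m, P m & forall w, P w -> R m w.
  by apply: wo_minimum; exists x; constructor 1.
have Rmx : R m x by apply: m_min; constructor 1.
have Rmz : R m z by apply: m_min; constructor 3.
case: Pm => -> in Rmx Rmz m_min *; first by [].
  by rewrite (@wo_antisym x y) ?Rxy.
by rewrite -(@wo_antisym y z) ?Ryz ?m_min //; constructor 2.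
Qed.

Definition wo_lt x y := ~~ R y x.

Lemma wo_lt_trans : transitive wo_lt.
Proof.
move=> y x z /negP Ryx /negP Rzy; apply/negP => Rzx; apply: Rzy.
by apply: wo_trans Rzx _; case/orP: (wo_total x y).
Qed.

Lemma wo_lt_trichotomy x y : [\/ x = y, wo_lt x y | wo_lt y x].
Proof.
rewrite /wo_lt; case Ryx: (R y x); last by constructor 2.
case Rxy: (R x y); last by constructor 3.
by constructor 1; apply: wo_antisym; rewrite Rxy Ryx.
Qed.

Lemma wo_lt_wf : well_founded wo_lt.
Proof.
move=> x; apply: contrapT => not_acc_x.
have [m not_acc_m m_min] := @wo_minimum (fun z => ~ Acc wo_lt z) (ex_intro _ x not_acc_x).
apply: not_acc_m; constructor => y /negP not_Rmy.
by apply: contrapT => not_acc_y; apply: not_Rmy; apply: m_min.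
Qed.

Definition countable_segment := {x : T | countable [set y | wo_lt y x]}.

Definition segment_lt (a b : countable_segment) := wo_lt (val a) (val b).

Lemma uncountable_countable_segment :
  ~ countable [set: T] -> ~ countable [set: countable_segment].
Proof.
move=> T_unc cS; pose G := val @` [set: countable_segment].
have cG : countable G by apply: countable_image.
have [x not_Gx] : exists x, ~ G x.
  apply: contrapT => /forallNP G_all; apply: T_unc.
  by apply: countable_subset cG => x _; apply: contrapT.
have [m not_Gm m_min] := @wo_minimum (fun z => ~ G z) (ex_intro _ x not_Gx).
have Gm : countable [set y | wo_lt y m].
  apply: countable_subset cG => y /negP not_Rmy.
  by apply: contrapT => not_Gy; apply: not_Rmy; apply: m_min.
by apply: not_Gm; exists (exist _ m Gm).
Qed.

Lemma omega1_order_segment_lt :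
  ~ countable [set: T] -> omega1_order segment_lt.
Proof.
move=> T_unc; split; first by move=> a; rewrite /segment_lt /wo_lt wo_refl.
split; first by move=> a b c; apply: wo_lt_trans.
split.
  by move=> a b; case: (wo_lt_trichotomy (val a) (val b)) => [/val_inj|ab|ba]; tauto.
split; first exact: wf_inverse_image wo_lt_wf.
split; first exact: uncountable_countable_segment.
move=> a; rewrite -(countable_inj_image _ val_inj).
by apply: countable_subset (valP a) => _ [b ba <-].
Qed.
End OmegaOneOfWellOrder.

Lemma omega1_order_exists : exists (I : Type) (lt : I -> I -> Prop), omega1_order lt.
Proof.
have [R R_wo] := well_ordering_principle (nat -> bool).
exists (countable_segment R), (segment_lt (R := R)).
exact: omega1_order_segment_lt R_wo uncountable_cantor.
Qed.

Definition agree (x y : nat -> bool) n := forall i, i < n -> x i = y i.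

Lemma agree_le x y m n : m <= n -> agree x y n -> agree x y m.
Proof. by move=> mn xy i im; apply: xy; apply: leq_trans mn. Qed.

Lemma mkseq_agreeP x y n : mkseq x n = mkseq y n <-> agree x y n.
Proof.
split=> [xy i ilt|xy]; first by have := congr1 (nth false ^~ i) xy; rewrite !nth_mkseq.
apply: (@eq_from_nth _ false) => [|i]; rewrite !size_mkseq // => ilt.
by rewrite !nth_mkseq ?xy.
Qed.

Lemma agree_first_diff x y : x <> y -> exists2 n, x n != y n & agree x y n.
Proof.
move=> xy; have [|n xyn n_min] := ex_minnP (P := fun n => x n != y n).
  apply: contrapT => /forallNP xy_eq; apply: xy; apply/funext => n.
  exact/eqP/negPn/negP/xy_eq.
by exists n => // i ilt; apply/eqP; apply: contraTT ilt => /n_min; rewrite -leqNgt.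
Qed.

Lemma agree_diff x y i n : agree x y n -> x i <> y i -> n <= i.
Proof. by move=> xy xyi; rewrite leqNgt; apply/negP => /xy. Qed.

Definition cylinder (s : seq bool) : set (nat -> bool) := [set x | mkseq x (size s) = s].

Definition separated n (Y Z : set (nat -> bool)) := forall y z, Y y -> Z z -> ~ agree y z n.

Lemma sub_separated m n (Y Z Y' Z' : set (nat -> bool)) :
  m <= n -> Y' `<=` Y -> Z' `<=` Z -> separated m Y Z -> separated n Y' Z'.
Proof. by move=> mn YY ZZ sep y z /YY Yy /ZZ Zz /(agree_le mn); apply: sep. Qed.

Lemma separated_sym n (Y Z : set (nat -> bool)) : separated n Y Z -> separated n Z Y.
Proof. by move=> sep z y Zz Yy zy; apply: sep Yy Zz _ => i /zy. Qed.

Lemma countable_thin_part (X : set (nat -> bool)) :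
  countable [set x | X x /\ exists n, countable (X `&` cylinder (mkseq x n))].
Proof.
pose D := [set s | countable (X `&` cylinder s)].
have cD : countable (\bigcup_(s in D) (X `&` cylinder s)) by apply: bigcup_countable.
apply: countable_subset cD => x [Xx [n cn]]; exists (mkseq x n) => //.
by split; rewrite /cylinder ?size_mkseq.
Qed.

(* Condensation: outside the countable thin part every point of X has only
   uncountable neighbourhoods in X, and two such points give Y and Z. *)
Lemma uncountable_split (X : set (nat -> bool)) : ~ countable X ->
  exists Y Z n, [/\ Y `<=` X, Z `<=` X, ~ countable Y, ~ countable Z & separated n Y Z].
Proof.
move=> X_unc.
pose D := [set x | X x /\ exists n, countable (X `&` cylinder (mkseq x n))].
have X'_unc : ~ countable (X `\` D).
  move=> cX'; apply: X_unc.
  apply: countable_subset (countable_setU (countable_thin_part X) cX') => x Xx.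
  by have [Dx|nDx] := pselect (D x); [left|right].
have [x [y [[Xx thick_x] [Xy thick_y] xy]]] := uncountable_two_points X'_unc.
have [n xyn xy_n] := agree_first_diff xy.
exists (X `&` cylinder (mkseq x n.+1)), (X `&` cylinder (mkseq y n.+1)), n.+1; split.
- by move=> ? [].
- by move=> ? [].
- by move=> cx; apply: thick_x; split=> //; exists n.+1.
- by move=> cy; apply: thick_y; split=> //; exists n.+1.
move=> u v [_ ux] [_ vy] uv; move: ux vy; rewrite /cylinder !size_mkseq.
move=> /mkseq_agreeP/(_ n (ltnSn n)) ux /mkseq_agreeP/(_ n (ltnSn n)) vy.
by move: xyn; rewrite -ux -vy uv ?eqxx.
Qed.

Lemma uncountable_split3 (X : set (nat -> bool)) : ~ countable X ->
  exists (Y : 'I_3 -> set (nat -> bool)) n,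
    (forall i, Y i `<=` X /\ ~ countable (Y i)) /\
    (forall i j, i != j -> separated n (Y i) (Y j)).
Proof.
move=> /uncountable_split[Y0 [Z [m [Y0X ZX Y0_unc Z_unc Y0Z]]]].
have [Y1 [Y2 [k [Y1Z Y2Z Y1_unc Y2_unc Y12]]]] := uncountable_split Z_unc.
pose Y (i : 'I_3) := match val i with 0 => Y0 | 1 => Y1 | _ => Y2 end.
have sep (i j : 'I_3) : i < j -> separated (maxn m k) (Y i) (Y j).
  move: i j => [[|[|[|//]]] ?] [[|[|[|//]]] ?] //= _.
  - exact: sub_separated (leq_maxl m k) (@subset_refl _ _) Y1Z Y0Z.
  - exact: sub_separated (leq_maxl m k) (@subset_refl _ _) Y2Z Y0Z.
  - exact: sub_separated (leq_maxr m k) (@subset_refl _ _) (@subset_refl _ _) Y12.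
exists Y, (maxn m k); split.
  move=> [[|[|[|//]]] ?] /=; split=> //; exact: subset_trans ZX.
by move=> i j; rewrite neq_ltn => /orP[/sep|/sep/separated_sym].
Qed.

Section LuzinFamily.
Variables (I : Type) (lt : I -> I -> Prop).
Hypothesis lt_omega1 : omega1_order lt.

Lemma lt_trans a b c : lt a b -> lt b c -> lt a c.
Proof. by case: lt_omega1 => _ [+ _]; apply. Qed.

Lemma lt_trichotomy a b : a = b \/ lt a b \/ lt b a.
Proof. by case: lt_omega1 => _ [_ [+ _]]; apply. Qed.

Lemma lt_wf : well_founded lt.
Proof. by case: lt_omega1 => _ [_ [_ []]]. Qed.

Lemma uncountable_index : ~ countable [set: I].
Proof. by case: lt_omega1 => _ [_ [_ [_ []]]]. Qed.

Lemma countable_lt a : countable [set b | lt b a].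
Proof. by case: lt_omega1 => _ [_ [_ [_ [_ +]]]]; apply. Qed.

Definition code a : I -> nat := sval (cid (elimT (countable_injP _) (countable_lt a))).

Lemma code_inj a b c : lt b a -> lt c a -> code a b = code a c -> b = c.
Proof.
by move=> ba ca; rewrite /code; case: cid => f /= f_inj; apply: f_inj; rewrite inE.
Qed.

Lemma finite_code_le a k : finite_set [set b | lt b a /\ code a b <= k].
Proof.
rewrite -(eq_finite_set (inj_card_eq (f := code a) _)); last first.
  by move=> b c; rewrite !inE => -[ba _] [ca _]; apply: code_inj.
by apply: sub_finite_set (finite_II k.+1) => _ [b [_ bk] <-].
Qed.

Definition pos_diag j := pickle (inl j : nat + nat * nat).
Definition pos_pair j k := pickle (inr (j, k) : nat + nat * nat).
Definition pos_bound k := (k + \max_(j < k.+1) pos_pair j k).+1.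

Lemma pos_pair_lt_bound j k : j <= k -> pos_pair j k < pos_bound k.
Proof.
move=> jk; rewrite ltnS (leq_trans _ (leq_addl k _)) //.
exact: (@leq_bigmax _ (fun i : 'I_k.+1 => pos_pair i k) (Ordinal (n := k.+1) jk)).
Qed.

Lemma lt_pos_bound k : k < pos_bound k.
Proof. by rewrite ltnS leq_addr. Qed.

(* For a given k only the positions pos_pair j k with j <= k are used, and they
   all lie below pos_bound k. *)
Definition flips a b p :=
  p = pos_diag (code a b) \/
  exists2 d, lt b d /\ lt d a & code a d <= code d b /\ p = pos_pair (code a d) (code d b).

Lemma flips_unique a b c p : lt b a -> lt c a -> flips a b p -> flips a c p -> b = c.
Proof.
move=> ba ca [->|[d [bd da] [_ ->]]] [|[d' [cd' d'a] [_]]] /(pcan_inj pickleK) //.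
  by case=> /code_inj; apply.
case=> /(code_inj da d'a) dd'; rewrite -dd' in cd' *.
exact: code_inj.
Qed.

Definition branch_step a (rec : forall b, lt b a -> nat -> bool) p : bool :=
  if pselect (exists b, lt b a /\ flips a b p) is left ex then
    let: exist b (conj ba _) := cid ex in ~~ rec b ba p
  else false.

Definition branch : I -> nat -> bool := Fix lt_wf (fun=> nat -> bool) branch_step.

Lemma branch_flips a b p : lt b a -> flips a b p -> branch a p = ~~ branch b p.
Proof.
move=> ba abp; rewrite /branch Fix_eq => [|x f g fg]; last first.
  apply/funext => q; rewrite /branch_step; case: pselect => // ex.
  by case: (cid ex) => c [cx _]; rewrite fg.
rewrite /branch_step; case: pselect => [ex|]; last by case; exists b.
by case: (cid ex) => c [ca acp]; rewrite (flips_unique ca ba acp abp).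
Qed.

Lemma branch_neq a b : a <> b -> exists i, branch a i <> branch b i.
Proof.
have diag c d : lt d c -> branch c (pos_diag (code c d)) <> branch d (pos_diag (code c d)).
  by move=> dc; rewrite (branch_flips dc (or_introl erefl)); case: (branch d _).
move=> ab; case: (lt_trichotomy a b) => [//|[/diag|/diag]] neq.
  by exists (pos_diag (code b a)) => /esym.
by exists (pos_diag (code a b)).
Qed.

Lemma branch_inj : injective branch.
Proof. by move=> a b ab; apply: contrapT => /branch_neq[i]; rewrite ab. Qed.

Lemma branch_pair_neq a d b : lt d a -> lt b d -> code a d <= code d b ->
  ~ agree (branch a) (branch b) (pos_bound (code d b)).
Proof.
move=> da bd ad_db ab; have := ab _ (pos_pair_lt_bound ad_db).
rewrite (branch_flips (lt_trans bd da)); first by case: (branch b _).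
by right; exists d.
Qed.

Lemma cut_exists a b : exists n, pos_bound (code a b) <= n /\
  forall c, lt c a -> code a c < code a b -> ~ agree (branch b) (branch c) n.
Proof.
pose P j m := forall c, lt c a -> code a c = j -> ~ agree (branch b) (branch c) m.
have [|n Pn] := @eventually_all (code a b) P.
  move=> j jb; have [[c [ca acj]]|no_c] := pselect (exists c, lt c a /\ code a c = j).
    2: by exists 0 => m _ c ca acj _; apply: no_c; exists c.
  have [|i bc] := @branch_neq b c; first by move=> bc; rewrite -acj bc ltnn in jb.
  exists i.+1 => m im c' c'a ac'j; rewrite -(code_inj ca c'a) ?acj // => bcm.
  exact: bc (bcm i im).
exists (maxn n (pos_bound (code a b))); rewrite leq_maxr; split=> // c ca acb.
exact: Pn (leq_maxl _ _) _ acb c ca erefl.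
Qed.

Definition cut a b : nat := sval (cid (cut_exists a b)).

Lemma pos_bound_le_cut a b : pos_bound (code a b) <= cut a b.
Proof. exact: (proj1 (svalP (cid (cut_exists a b)))). Qed.

Lemma cut_separates a b c : lt c a -> code a c < code a b ->
  ~ agree (branch b) (branch c) (cut a b).
Proof. exact: (proj2 (svalP (cid (cut_exists a b)))). Qed.

Local Notation point := (seq bool * seq bool)%type.

Definition trunk a : set point :=
  [set p | p.1 = mkseq (branch a) (size p.1) /\ size p.2 = size p.1].
Definition link a b : point := (mkseq (branch b) (cut a b), mkseq (branch a) (cut a b)).
Definition links a : set point := link a @` [set b | lt b a].
Definition fam a : set point := trunk a `|` links a.

Definition coord (c : bool) (p : point) := if c then p.1 else p.2.

Lemma fam_shape a p : fam a p ->
  size p.2 = size p.1 /\ exists c, coord c p = mkseq (branch a) (size p.1).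
Proof.
case=> [[p1 p2]|[b _ <-]]; first by split=> //; exists true.
by rewrite /= !size_mkseq; split=> //; exists false.
Qed.

Lemma link_in_fam a b : lt b a -> fam a (link a b) /\ fam b (link a b).
Proof. by move=> ba; split; [right; exists b|left; rewrite /trunk /= !size_mkseq]. Qed.

Lemma fam_infinite a : infinite_set (fam a).
Proof.
move=> /(finite_set_bounded (fun p : point => size p.1))[n n_bound].
have /n_bound : fam a (mkseq (branch a) n, mkseq (branch a) n).
  by left; rewrite /trunk /= !size_mkseq.
by rewrite /= size_mkseq ltnn.
Qed.

Definition square n : set point := [set s | size s < n] `*` [set s | size s < n].

Lemma finite_square n : finite_set (square n).
Proof. by apply: finite_setX; apply: finite_short_seqs. Qed.

Lemma trunk_trunk_finite a d : a <> d -> finite_set (trunk a `&` trunk d).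
Proof.
move=> /branch_neq[i ad]; apply: sub_finite_set (finite_square i.+1) => p [[pa p2] [pd _]].
have /agree_diff/(_ ad) : agree (branch a) (branch d) (size p.1).
  by apply/mkseq_agreeP; rewrite -pa -pd.
by rewrite /square /= p2 ltnS.
Qed.

Lemma links_links_finite a d : a <> d -> finite_set (links a `&` links d).
Proof.
move=> /branch_neq[i ad]; apply: sub_finite_set (finite_square i.+1) => _ [[b _ <-] [b' _]].
move=> /(congr1 snd) /= e; have cut_eq : cut d b' = cut a b.
  by have := congr1 size e; rewrite !size_mkseq.
have /agree_diff/(_ ad) : agree (branch a) (branch d) (cut a b).
  by apply/mkseq_agreeP; rewrite -e cut_eq.
by rewrite /square /= !size_mkseq ltnS.
Qed.

Lemma trunk_links_finite a d : lt a d -> finite_set (trunk a `&` links d).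
Proof.
move=> ad; apply: sub_finite_set (finite_image (link d) (finite_code_le d (code d a))).
move=> p [[ta _] [b bd ebp]]; rewrite -ebp /= size_mkseq in ta.
exists b => //; split=> //.
rewrite leqNgt; apply/negP => da_db; apply: (cut_separates ad da_db).
exact/mkseq_agreeP.
Qed.

Lemma links_trunk_finite a d : lt a d -> finite_set (links a `&` trunk d).
Proof.
move=> ad; apply: sub_finite_set (finite_image (link a) (finite_code_le a (code d a))).
move=> _ [[b ba <-] [td _]]; rewrite /= size_mkseq in td.
exists b => //; split=> //.
apply: ltnW; rewrite ltnNge; apply/negP => da_ab; apply: (branch_pair_neq ad ba da_ab).
by apply: agree_le (pos_bound_le_cut a b) _; apply/mkseq_agreeP.
Qed.

Lemma fam_almost_disjoint a d : a <> d -> finite_set (fam a `&` fam d).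
Proof.
wlog ad : a d / lt a d => [wlog_lt neq|neq].
  case: (lt_trichotomy a d) => [//|[lt_ad|lt_da]]; first exact: wlog_lt.
  by rewrite setIC; apply: wlog_lt lt_da _ => /esym.
rewrite /fam setIUl !setIUr !finite_setU; split; split.
- exact: trunk_trunk_finite.
- exact: trunk_links_finite.
- exact: links_trunk_finite.
- exact: links_links_finite.
Qed.

Lemma fam_inj : injective fam.
Proof.
move=> a d ad; apply: contrapT => /fam_almost_disjoint; rewrite -ad setIid.
exact: fam_infinite.
Qed.

Lemma fam_luzin a w : finite_set w ->
  finite_set [set b | lt b a /\ fam a `&` fam b `<=` w].
Proof.
move=> /(finite_set_bounded (fun p : point => size p.1))[n n_bound].
apply: sub_finite_set (finite_code_le a n) => b [ba faw]; split=> //.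
have := n_bound _ (faw _ (link_in_fam ba)); rewrite /= size_mkseq => cut_n.
apply: ltnW; apply: leq_trans (lt_pos_bound _) _.
exact: leq_trans (pos_bound_le_cut a b) (ltnW cut_n).
Qed.

Lemma luzin_range_fam : luzin (range fam).
Proof.
split.
  split; first by move=> _ [a _ <-]; apply: fam_infinite.
  move=> _ _ [a _ <-] [d _ <-] neq; apply: fam_almost_disjoint.
  by move=> ad; apply: neq; rewrite ad.
split.
  rewrite /uncountable countable_inj_image; [exact: uncountable_index|exact: fam_inj].
exists I, lt, fam; split=> //; first exact: fam_inj.
by move=> w a; apply: fam_luzin.
Qed.

Lemma fam_common_point_short (a : 'I_3 -> I) n p :
  (forall i j, i != j -> ~ agree (branch (a i)) (branch (a j)) n) ->
  (forall i, fam (a i) p) -> size p.1 < n.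
Proof.
move=> sep p_fam; rewrite ltnNge; apply/negP => np.
have /choice[c c_match] : forall i, exists c, coord c p = mkseq (branch (a i)) (size p.1).
  by move=> i; have [_] := fam_shape (p_fam i).
have [|i [j ij cij]] := ex_collision c; first by rewrite card_bool card_ord.
apply: (sep i j ij); apply: agree_le np _; apply/mkseq_agreeP.
by rewrite -c_match cij c_match.
Qed.

Lemma fam_not_near_luzin (B : set (set point)) :
  B `<=` range fam -> uncountable B -> ~ near_luzin 3 B.
Proof.
move=> B_fam B_unc B_nl; pose J := fam @^-1` B.
have BJ : B = fam @` J.
  apply/seteqP; split=> [c Bc|_ [a Ja <-] //].
  by have [a _ fac] := B_fam c Bc; exists a; rewrite /J /preimage /= fac.
have J_unc : ~ countable J.
  by move: B_unc; rewrite BJ /uncountable countable_inj_image //; exact: fam_inj.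
have [|Y [n [YX Y_sep]]] := @uncountable_split3 (branch @` J).
  by rewrite countable_inj_image //; exact: branch_inj.
pose C i := fam @` (J `&` branch @^-1` Y i).
apply: (B_nl C) => [i|]; first split.
- by move=> _ [a [Ja _] <-].
- rewrite /uncountable countable_inj_image; last exact: fam_inj.
  have [YiX Yi_unc] := YX i; move=> cJY; apply: Yi_unc.
  apply: countable_subset (countable_image branch cJY) => x Yix.
  by have [a Ja ax] := YiX x Yix; exists a => //; split; rewrite //= /preimage ax.
apply: sub_finite_set (finite_square n) => p p_all.
have /choice[a a_spec] : forall i, exists a, (J `&` branch @^-1` Y i) a /\ fam a p.
  by move=> i; have [_ [a Ja <-] fap] := p_all i Logic.I; exists a.
have short : size p.1 < n.
  apply: (fam_common_point_short (a := a)) => [i j ij|i]; last exact: (a_spec i).2.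
  exact: Y_sep ij _ _ (a_spec i).1.2 (a_spec j).1.2.
by have [p2 _] := fam_shape (a_spec ord0).2; rewrite /square /= p2.
Qed.

End LuzinFamily.

Theorem theorem5p9 :
  exists (W : Type) (A : set (set W)),
    countable [set: W] /\ luzin A /\
    forall B : set (set W), B `<=` A -> uncountable B -> ~ near_luzin 3 B.
Proof.
have [I [lt lt_omega1]] := omega1_order_exists.
exists (seq bool * seq bool)%type, (range (fam lt_omega1)).
split; first exact: countableP.
split; first exact: luzin_range_fam.
by move=> B; apply: fam_not_near_luzin.
Qed.
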